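(* Let $\mathscr{P}^{S_5}_\bullet$ be the group-action model associated with the Petersen graph, and let $\mathscr{Q}_\bullet$ be the family generated by $\mathscr{P}^{S_5}_2\cup\{\mathrm{GHZ}\}$. Then $\mathscr{Q}_\bullet=\mathscr{P}^{S_5}_\bullet$ if and only if the transposition $R$ belongs to $\mathscr{Q}_4$.
   Context: The Petersen graph $\Gamma$ is the Kneser graph $KG_{5,2}$: vertex set $V_\Gamma$ = the $2$-element subsets of $\{1,\dots,5\}$, adjacency = disjointness. Let $W=\mathbb{C}^{V_\Gamma}$ with basis $(e_v)_{v\in V_\Gamma}$; $S_5$ acts by $\pi\cdot e_{\{a,b\}}=e_{\{\pi(a),\pi(b)\}}$ and diagonally on $W^{\otimes n}$. Set $\mathscr{P}_0=\mathbb{C}$, $\mathscr{P}_n=W^{\otimes n}$, and $\mathscr{P}^{S_5}_n$ = the $S_5$-fixed vectors of $\mathscr{P}_n$. $\mathrm{GHZ}=\sum_{v}e_v\otimes e_v\otimes e_v$, $R=\sum_{u,v}e_u\otimes e_v\otimes e_u\otimes e_v$. Operations: tensor product; contraction $C_{k,k+1}:\mathscr{P}_n\to\mathscr{P}_{n-2}$, $C_{k,k+1}(e_{v_1}\otimes\cdots\otimes e_{v_n})=\delta_{v_k,v_{k+1}}e_{v_1}\otimes\cdots\otimes\widehat{e_{v_k}}\otimes\widehat{e_{v_{k+1}}}\otimes\cdots\otimes e_{v_n}$; rotation $\rho(e_{v_1}\otimes\cdots\otimes e_{v_n})=e_{v_2}\otimes\cdots\otimes e_{v_n}\otimes e_{v_1}$.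 The family generated by a set $X$ of tensors is the smallest family $(\mathscr{Q}_n)_{n\ge0}$ of linear subspaces $\mathscr{Q}_n\subseteq\mathscr{P}_n$ containing $X$, with $1\in\mathscr{Q}_0$, closed under tensor product, all contractions $C_{k,k+1}$, and rotation. *)

From HB Require Import structures.
From mathcomp Require Import all_boot all_order all_algebra all_fingroup.
Set Implicit Arguments. Unset Strict Implicit. Unset Printing Implicit Defensive.
Import GRing.Theory Num.Theory.
Local Open Scope ring_scope.

(* Vertices of the Petersen graph KG_{5,2}: 2-element subsets of {0,..,4}
   (the paper's {1,..,5}, shifted). *)
Definition Vtx : finType := {A : {set 'I_5} | #|A| == 2%N}.

(* S_5 acts on vertices: pi . {a,b} = {pi a, pi b}.  The image always has
   cardinality 2, so the default of insubd is never used. *)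
Definition actV (pi : {perm 'I_5}) (v : Vtx) : Vtx :=
  insubd v (pi @: val v).

Section Tensors.
Variable F : numClosedFieldType.

(* P_n = W^{(x) n}, a tensor is given by its coordinates on the basis
   e_{v_1} (x) ... (x) e_{v_n}, indexed by words of length n. *)
Definition tensor (n : nat) := {ffun n.-tuple Vtx -> F}.

Definition tunit : tensor 0 := [ffun _ => 1].

Definition tprod n m (s : tensor n) (t : tensor m) : tensor (n + m) :=
  [ffun w : (n + m).-tuple Vtx =>
     s [tuple tnth w (lshift m i) | i < n] * t [tuple tnth w (rshift n j) | j < m]].

(* contraction C_{k+1,k+2} (0-indexed positions k, k+1) : P_{n+2} -> P_n,
   for k <= n *)
Definition contr n (k : nat) (t : tensor n.+2) : tensor n :=
  [ffun w : n.-tuple Vtx =>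
     \sum_(u : Vtx) t [tuple nth u (take k w ++ u :: u :: drop k w) i | i < n.+2]].

(* rotation rho(e_{v1}..e_{vn}) = e_{v2}..e_{vn} e_{v1};
   coordinatewise (rho t)(w) = t(rotr 1 w). *)
Definition rot n (t : tensor n) : tensor n :=
  [ffun w : n.-tuple Vtx => t [tuple of rotr 1 w]].

Definition fixedS5 n (t : tensor n) : Prop :=
  forall (pi : {perm 'I_5}) (w : n.-tuple Vtx),
    t [tuple of map (actV pi) w] = t w.

Definition GHZ : tensor 3 :=
  [ffun w : 3.-tuple Vtx =>
     ((tnth w (@Ordinal 3 0 isT) == tnth w (@Ordinal 3 1 isT)) &&
      (tnth w (@Ordinal 3 1 isT) == tnth w (@Ordinal 3 2 isT)))%:R].

Definition Rtr : tensor 4 :=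
  [ffun w : 4.-tuple Vtx =>
     ((tnth w (@Ordinal 4 0 isT) == tnth w (@Ordinal 4 2 isT)) &&
      (tnth w (@Ordinal 4 1 isT) == tnth w (@Ordinal 4 3 isT)))%:R].

Record closed_family (Q : forall n, tensor n -> Prop) : Prop := {
  fam_0 : forall n, Q n 0;
  fam_add : forall n (s t : tensor n), Q n s -> Q n t -> Q n (s + t);
  fam_scale : forall n (c : F) (t : tensor n), Q n t -> Q n [ffun w => c * t w];
  fam_unit : Q 0 tunit;
  fam_prod : forall n m (s : tensor n) (t : tensor m),
      Q n s -> Q m t -> Q (n + m)%N (tprod s t);
  fam_contr : forall n k (t : tensor n.+2),
      (k <= n)%N -> Q n.+2 t -> Q n (contr k t);
  fam_rot : forall n (t : tensor n), Q n t -> Q n (rot t)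
}.

Definition genQ n (t : tensor n) : Prop :=
  forall Q : forall m, tensor m -> Prop,
    closed_family Q ->
    (forall s : tensor 2, fixedS5 s -> Q 2%N s) ->
    Q 3%N GHZ ->
    Q n t.

End Tensors.

(* (=>) R is S_5-invariant, so if the generated family is P^{S_5} then it
   contains R.  The S_5-invariant tensors form a closed family containing
   P^{S_5}_2 and GHZ, so the generated family is always inside P^{S_5}.

   (<=) Let Q be a closed family containing P^{S_5}_2, GHZ and R.
   1. Contracting against R swaps two legs, against GHZ merges two legs, and
      the all-ones vector (a contraction of GHZ) adds a free leg.  With
      rotations these generate every re-indexing f |-> f o phi^* along a map
      phi : [m] -> [n]; in particular Q is closed under pointwise products and
      contains every invariant function of two letters, placed on any two
      legs of a word.
   2. Petersen combinatorics (checked by computation on an enumeration of the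
      ten vertices): for the base triple b = ({0,1},{0,2},{0,3}),
        S(z) = [z pairwise at distance 2] (1 - #common neighbours of z)
      counts the permutations mapping b to z, and every vertex y is determined
      by its distances to b_1, b_2, b_3.
   3. Hence Y_x(y) = sum_z S(z) prod_j [d(z_k,y_j) = d(b_k,x_j) for k=1,2,3]
      counts the permutations mapping the word x to y, and lies in Q by 1.
      An invariant t equals (1/120) sum_x t(x) Y_x, so t lies in Q. *)

From Pilot Require Import Defs.
From HB Require Import structures.
From mathcomp Require Import all_boot all_order all_algebra all_fingroup.
From mathcomp Require Import zify.
Set Implicit Arguments. Unset Strict Implicit. Unset Printing Implicit Defensive.
Import GRing.Theory Num.Theory.

(* A default vertex, padding words that are too short. *)
Definition vtx0 : Vtx.
Proof.
exists [set (inord 0 : 'I_5); inord 1].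
by rewrite cards2 -(inj_eq val_inj) /= !inordK.
Defined.

Lemma mktuple_nth n (x : Vtx) (s : seq Vtx) : size s = n ->
  val [tuple nth x s i | i < n] = s.
Proof.
move=> Hs; apply: (@eq_from_nth _ x); first by rewrite size_tuple.
move=> i; rewrite size_tuple => Hi.
by rewrite (nth_mktuple _ x (Ordinal Hi)).
Qed.

Section WordFunctions.
Variable F : numClosedFieldType.
Local Open Scope ring_scope.

Definition tensor_of n (f : seq Vtx -> F) : tensor F n :=
  [ffun w : n.-tuple Vtx => f w].

Definition coord n (t : tensor F n) (s : seq Vtx) : F :=
  t [tuple nth vtx0 s i | i < n].

Lemma coordK n (t : tensor F n) : tensor_of n (coord t) = t.
Proof.
apply/ffunP => w; rewrite ffunE /coord; congr (t _); apply: val_inj.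
by rewrite mktuple_nth // size_tuple.
Qed.

Lemma tprod_tensor_of n m (f g : seq Vtx -> F) :
  tprod (tensor_of n f) (tensor_of m g) =
  tensor_of (n + m) (fun s => f (take n s) * g (drop n s)).
Proof.
apply/ffunP => w; rewrite !ffunE; congr (f _ * g _).
  apply: (@eq_from_nth _ vtx0).
    by rewrite size_tuple size_take size_tuple; case: ltnP; lia.
  move=> i; rewrite size_tuple => Hi.
  by rewrite (nth_mktuple _ vtx0 (Ordinal Hi)) nth_take // (tnth_nth vtx0).
apply: (@eq_from_nth _ vtx0); first by rewrite size_tuple size_drop size_tuple; lia.
move=> i; rewrite size_tuple => Hi.
by rewrite (nth_mktuple _ vtx0 (Ordinal Hi)) nth_drop (tnth_nth vtx0).
Qed.

Lemma contr_tensor_of n k (f : seq Vtx -> F) : (k <= n)%N ->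
  contr k (tensor_of n.+2 f) =
  tensor_of n (fun s => \sum_(u : Vtx) f (take k s ++ u :: u :: drop k s)).
Proof.
move=> Hk; apply/ffunP => w; rewrite !ffunE; apply: eq_bigr => u _.
rewrite ffunE mktuple_nth //.
by rewrite size_cat /= size_drop size_take size_tuple; case: ltnP; lia.
Qed.

Lemma rot_tensor_of n (f : seq Vtx -> F) :
  Defs.rot (tensor_of n f) = tensor_of n (fun s => f (rotr 1 s)).
Proof. by apply/ffunP => w; rewrite !ffunE. Qed.

End WordFunctions.

(* Bounded quantifications over iota, in a form decidable by computation. *)
Lemma all_iotaP (P : pred nat) n : all P (iota 0 n) -> forall k, k < n -> P k.
Proof. by move/allP => H k Hk; apply: H; rewrite mem_iota. Qed.

Lemma all2_iotaP (P : nat -> nat -> bool) n m :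
  all (fun k => all (P k) (iota 0 m)) (iota 0 n) ->
  forall k l, k < n -> l < m -> P k l.
Proof. by move=> H k l Hk Hl; apply: (all_iotaP (all_iotaP H Hk) Hl). Qed.

Lemma all3_iotaP (P : nat -> nat -> nat -> bool) n :
  all (fun a => all (fun b => all (P a b) (iota 0 n)) (iota 0 n)) (iota 0 n) ->
  forall a b c, a < n -> b < n -> c < n -> P a b c.
Proof. by move=> H a b c Ha Hb Hc; apply: (all_iotaP (all2_iotaP H Ha Hb) Hc). Qed.

Section TwoElementSets.
Variable T : finType.
Implicit Types x y : T.

Lemma set2_eq x y x' y' : x != y -> x' != y' ->
  ([set x; y] == [set x'; y']) = ((x == x') && (y == y')) || ((x == y') && (y == x')).
Proof.
move=> Hxy Hxy'; apply/eqP/idP; last first.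
  by case/orP => /andP [/eqP <- /eqP <-] //; rewrite setUC.
move/setP => H.
have Hx : (x == x') || (x == y') by have := H x; rewrite !inE eqxx.
have Hy : (y == x') || (y == y') by have := H y; rewrite !inE eqxx orbT.
have Hyx : (y == x) = false by rewrite eq_sym (negbTE Hxy).
case/orP: Hx => /eqP Ex; subst.
  by move: Hy; rewrite Hyx /= => ->; rewrite eqxx.
by move: Hy; rewrite Hyx orbF => ->; rewrite eqxx orbT.
Qed.

Lemma set2_disjoint x y x' y' :
  [disjoint [set x; y] & [set x'; y']] = [&& x != x', x != y', y != x' & y != y'].
Proof.
apply/idP/idP => [H | /and4P [H1 H2 H3 H4]].
  have Hy : y \in [set x; y] by rewrite !inE eqxx orbT.
  move: (disjointFr H (setU11 x [set y])) (disjointFr H Hy).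
  by rewrite !inE => /norP [-> ->] /norP [-> ->].
rewrite disjoint_subset; apply/subsetP => z.
by rewrite !inE => /orP [] /eqP ->; rewrite negb_or; apply/andP.
Qed.

End TwoElementSets.

Definition lo k := nth 0 [:: 0;0;0;0;1;1;1;2;2;3] k.
Definition hi k := nth 0 [:: 1;2;3;4;2;3;4;3;4;4] k.
Definition vtx k : Vtx := insubd vtx0 [set (inord (lo k) : 'I_5); inord (hi k)].

Lemma inord_eq a b : a < 5 -> b < 5 -> ((inord a : 'I_5) == inord b) = (a == b).
Proof. by move=> Ha Hb; rewrite -(inj_eq val_inj) /= !inordK. Qed.

Lemma lo_hi k : k < 10 -> [&& lo k < 5, hi k < 5 & lo k != hi k].
Proof. exact: (all_iotaP (P := fun k => [&& lo k < 5, hi k < 5 & lo k != hi k])). Qed.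

Lemma val_vtx k : k < 10 -> val (vtx k) = [set (inord (lo k) : 'I_5); inord (hi k)].
Proof.
move=> Hk; case/and3P: (lo_hi Hk) => H1 H2 H3.
by rewrite val_insubd cards2 inord_eq // H3.
Qed.

Lemma eq_vtx k l : k < 10 -> l < 10 -> (vtx k == vtx l) = (k == l).
Proof.
move=> Hk Hl; rewrite -val_eqE /= !val_vtx //.
case/and3P: (lo_hi Hk) => H1 H2 H3; case/and3P: (lo_hi Hl) => H4 H5 H6.
rewrite set2_eq ?inord_eq //; apply/eqP; move: k l Hk Hl {H1 H2 H3 H4 H5 H6}.
exact: (all2_iotaP (P := fun k l => (((lo k == lo l) && (hi k == hi l))
  || ((lo k == hi l) && (hi k == lo l))) == (k == l))).
Qed.

Definition adjc k l := [&& lo k != lo l, lo k != hi l, hi k != lo l & hi k != hi l].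

Lemma disjoint_vtx k l : k < 10 -> l < 10 ->
  [disjoint val (vtx k) & val (vtx l)] = adjc k l.
Proof.
move=> Hk Hl; rewrite !val_vtx // set2_disjoint.
case/and3P: (lo_hi Hk) => H1 H2 H3; case/and3P: (lo_hi Hl) => H4 H5 H6.
by rewrite !inord_eq.
Qed.

Definition vtx_index x y := find (fun k => ((lo k == x) && (hi k == y))
  || ((lo k == y) && (hi k == x))) (iota 0 10).

Lemma vtx_indexP x y : x < 5 -> y < 5 -> x != y ->
  vtx_index x y < 10 /\ [set (inord x : 'I_5); inord y] = val (vtx (vtx_index x y)).
Proof.
move=> Hx Hy Hxy; set c := vtx_index x y.
have /andP [Hc H] : (c < 10) && (((lo c == x) && (hi c == y)) || ((lo c == y) && (hi c == x))).
  have := @all2_iotaP (fun x y => (x != y) ==> ((vtx_index x y < 10) &&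
    (((lo (vtx_index x y) == x) && (hi (vtx_index x y) == y))
     || ((lo (vtx_index x y) == y) && (hi (vtx_index x y) == x))))) 5 5 isT x y Hx Hy.
  by rewrite Hxy.
split => //; rewrite val_vtx //; case/and3P: (lo_hi Hc) => H1 H2 H3.
apply/eqP; rewrite set2_eq ?inord_eq //.
by case/orP: H => /andP [/eqP -> /eqP ->]; rewrite !eqxx ?orbT.
Qed.

Lemma vtx_surj (v : Vtx) : exists2 k, k < 10 & v = vtx k.
Proof.
have /cards2P [x [y [Hxy Hv]]] := valP v.
have [Hc Hs] := @vtx_indexP (val x) (val y) (ltn_ord x) (ltn_ord y) Hxy.
by exists (vtx_index x y) => //; apply: val_inj; rewrite -Hs !inord_val.
Qed.

Lemma val_actV (pi : {perm 'I_5}) (v : Vtx) : val (actV pi v) = pi @: val v.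
Proof.
rewrite /actV val_insubd card_imset; last exact: perm_inj.
by rewrite (eqP (valP v)) eqxx.
Qed.

Lemma actV_inj pi : injective (actV pi).
Proof.
move=> u w /(congr1 val); rewrite !val_actV => /(imset_inj (@perm_inj _ pi)).
exact: val_inj.
Qed.

Lemma actVK pi v : actV pi^-1 (actV pi v) = v.
Proof.
apply: val_inj; rewrite !val_actV -imset_comp (eq_imset (g := id)) ?imset_id //.
by move=> x /=; rewrite permK.
Qed.

Lemma actKV pi v : actV pi (actV pi^-1 v) = v.
Proof. by rewrite -{1}(invgK pi) actVK. Qed.

Definition perm_list (pi : {perm 'I_5}) : seq nat := [seq val (pi (inord a)) | a <- iota 0 5].
Definition perm_lists : seq (seq nat) := permutations (iota 0 5).

(* perm_list is a bijection from S_5 onto perm_lists, so sums over S_5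
   can be computed on perm_lists. *)
Lemma nth_perm_list pi a : a < 5 -> nth 0 (perm_list pi) a = val (pi (inord a)).
Proof. by move=> Ha; rewrite (nth_map 0) ?size_iota // nth_iota. Qed.

Lemma perm_list_uniq pi : uniq (perm_list pi).
Proof.
rewrite map_inj_in_uniq ?iota_uniq // => i j; rewrite !mem_iota /= => Hi Hj.
by move/val_inj/perm_inj/(congr1 val); rewrite /= !inordK.
Qed.

Lemma perm_list_mem pi : perm_list pi \in perm_lists.
Proof.
rewrite mem_permutations; apply: uniq_perm; rewrite ?perm_list_uniq ?iota_uniq //.
have Hsub : {subset perm_list pi <= iota 0 5}.
  by move=> x /mapP [i _ ->]; rewrite mem_iota ltn_ord.
have Hsz : size (iota 0 5) <= size (perm_list pi) by rewrite size_map.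
exact: (uniq_min_size (perm_list_uniq pi) Hsub Hsz).2.
Qed.

Lemma perm_list_inj : injective perm_list.
Proof.
move=> p q /(congr1 (fun l => nth 0 l _)) H; apply/permP => i; apply: val_inj.
by have := H i; rewrite !nth_perm_list // inord_val.
Qed.

Lemma perm_list_surj l : l \in perm_lists -> exists pi, perm_list pi = l.
Proof.
rewrite mem_permutations => Hl.
have Hs : size l = 5 by rewrite (perm_size Hl) size_iota.
have Hu : uniq l by rewrite (perm_uniq Hl) iota_uniq.
have Hlt i : i < 5 -> nth 0 l i < 5.
  move=> Hi; have : nth 0 l i \in iota 0 5 by rewrite -(perm_mem Hl) mem_nth // Hs.
  by rewrite mem_iota.
have injf : injective (fun i : 'I_5 => (inord (nth 0 l i) : 'I_5)).
  move=> i j /= /(congr1 val) /=; rewrite !inordK ?Hlt // => /eqP.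
  by rewrite nth_uniq ?Hs // => /eqP /val_inj.
exists (perm injf); apply: (@eq_from_nth _ 0); first by rewrite size_map size_iota Hs.
move=> i; rewrite size_map size_iota => Hi.
by rewrite nth_perm_list // permE /= !inordK // Hlt.
Qed.

Definition actc (l : seq nat) k := vtx_index (nth 0 l (lo k)) (nth 0 l (hi k)).

Lemma actV_vtx pi k : k < 10 ->
  actc (perm_list pi) k < 10 /\ actV pi (vtx k) = vtx (actc (perm_list pi) k).
Proof.
move=> Hk; case/and3P: (lo_hi Hk) => H1 H2 H3; rewrite /actc !nth_perm_list //.
have Hn : val (pi (inord (lo k))) != val (pi (inord (hi k))).
  by rewrite (inj_eq val_inj) (inj_eq (@perm_inj _ pi)) inord_eq.
have [Hc Hs] := vtx_indexP (ltn_ord _) (ltn_ord _) Hn.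
split => //; apply: val_inj.
by rewrite -Hs val_actV val_vtx // imsetU1 imset_set1 !inord_val.
Qed.

Lemma eq_vtx_act pi k l : k < 10 -> l < 10 ->
  (vtx k == actV pi (vtx l)) = (k == actc (perm_list pi) l).
Proof. by move=> Hk Hl; have [H1 ->] := actV_vtx pi Hl; rewrite eq_vtx. Qed.

(* The distance in the Petersen graph (of diameter 2): 0 for equal vertices,
   1 for adjacent (disjoint) ones and 2 otherwise. *)
Definition pdist (u w : Vtx) : nat :=
  if u == w then 0 else if [disjoint val u & val w] then 1 else 2.
Definition pdistc k l : nat := if k == l then 0 else if adjc k l then 1 else 2.

Lemma pdist_vtx k l : k < 10 -> l < 10 -> pdist (vtx k) (vtx l) = pdistc k l.
Proof. by move=> Hk Hl; rewrite /pdist /pdistc eq_vtx // disjoint_vtx. Qed.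

Lemma pdist_act pi u w : pdist (actV pi u) (actV pi w) = pdist u w.
Proof.
by rewrite /pdist (inj_eq (@actV_inj pi)) !val_actV imset_disjoint //; apply: perm_inj.
Qed.

Lemma base_resolving (w v : Vtx) :
  pdist (vtx 0) w = pdist (vtx 0) v -> pdist (vtx 1) w = pdist (vtx 1) v ->
  pdist (vtx 2) w = pdist (vtx 2) v -> w = v.
Proof.
have [k Hk ->] := vtx_surj w; have [l Hl ->] := vtx_surj v.
rewrite !pdist_vtx // => E0 E1 E2; congr vtx.
have := @all2_iotaP (fun k l => [&& pdistc 0 k == pdistc 0 l, pdistc 1 k == pdistc 1 l
  & pdistc 2 k == pdistc 2 l] ==> (k == l)) 10 10 (ltac:(by vm_compute)) k l Hk Hl.
by rewrite E0 E1 E2 !eqxx => /eqP.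
Qed.

Definition orbit_count_spec k1 k2 k3 :=
  let far := [&& pdistc k1 k2 == 2, pdistc k1 k3 == 2 & pdistc k2 k3 == 2] in
  let common := count (fun m => [&& pdistc k1 m == 1, pdistc k2 m == 1 & pdistc k3 m == 1])
                  (iota 0 10) in
  let perms := count (fun l => [&& k1 == actc l 0, k2 == actc l 1 & k3 == actc l 2])
                 perm_lists in
  if far then (common <= 1) && (perms == 1 - common) else perms == 0.

Lemma orbit_count_specP k1 k2 k3 : k1 < 10 -> k2 < 10 -> k3 < 10 ->
  orbit_count_spec k1 k2 k3.
Proof. by apply: all3_iotaP; vm_compute. Qed.

Section IndicatorSums.
Variable R : comPzSemiRingType.
Local Open Scope ring_scope.

Lemma natr_and (b1 b2 : bool) : ((b1 && b2)%:R : R) = b1%:R * b2%:R.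
Proof. by rewrite -mulnb natrM. Qed.

Lemma natr_and3 (b1 b2 b3 : bool) :
  ([&& b1, b2 & b3]%:R : R) = b1%:R * b2%:R * b3%:R.
Proof. by rewrite !natr_and mulrA. Qed.

Lemma sum_delta (T : finType) (p : T) (G : T -> R) : \sum_(u : T) G u * (u == p)%:R = G p.
Proof.
rewrite (bigD1 p) //= eqxx mulr1 big1 ?addr0 // => u /negbTE ->.
by rewrite mulr0.
Qed.

Lemma sum_delta_l (T : finType) (p : T) (G : T -> R) : \sum_(u : T) (u == p)%:R * G u = G p.
Proof.
rewrite (bigD1 p) //= eqxx mul1r big1 ?addr0 // => u /negbTE ->.
by rewrite mul0r.
Qed.

Lemma sum_count (T : Type) (r : seq T) (P : pred T) :
  \sum_(x <- r) ((P x)%:R : R) = (count P r)%:R.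
Proof. by elim: r => [|x r IH]; rewrite ?big_nil ?big_cons ?IH //= natrD. Qed.

Lemma prod_natb n (P : 'I_n -> bool) : \prod_(j < n) ((P j)%:R : R) = ([forall j, P j])%:R.
Proof.
case: (boolP [forall j, P j]) => [/forallP H | /forallPn [j Hj]].
  by rewrite big1 // => j _; rewrite H.
by rewrite (bigD1 j) //= (negbTE Hj) mul0r.
Qed.

Lemma sum_vtx (G : Vtx -> R) : \sum_(u : Vtx) G u = \sum_(m < 10) G (vtx m).
Proof.
have Hperm : perm_eq [seq vtx m | m : 'I_10 <- index_enum 'I_10] (index_enum Vtx).
  apply: uniq_perm; rewrite ?index_enum_uniq ?map_inj_uniq ?index_enum_uniq //.
    by move=> m m' /eqP; rewrite eq_vtx ?ltn_ord // => /eqP /val_inj.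
  move=> u; rewrite mem_index_enum; have [k Hk ->] := vtx_surj u.
  by apply/mapP; exists (Ordinal Hk); rewrite ?mem_index_enum.
by rewrite -(perm_big _ Hperm) big_map.
Qed.

Lemma sum_perm (G : seq nat -> R) :
  \sum_(pi : {perm 'I_5}) G (perm_list pi) = \sum_(l <- perm_lists) G l.
Proof.
have Hperm : perm_eq [seq perm_list pi | pi <- index_enum {perm 'I_5}] perm_lists.
  apply: uniq_perm; rewrite ?permutations_uniq ?map_inj_uniq ?index_enum_uniq //.
    exact: perm_list_inj.
  move=> l; apply/mapP/idP => [[pi _ ->] | /perm_list_surj [pi <-]].
    exact: perm_list_mem.
  by exists pi; rewrite ?mem_index_enum.
by rewrite -(perm_big _ Hperm) big_map.
Qed.

End IndicatorSums.

Section OrbitIndicator.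
Variable R : comPzRingType.
Local Open Scope ring_scope.

Definition dist_ind (r : nat) (u w : Vtx) : R := (pdist u w == r)%:R.

Definition orbit_poly (z1 z2 z3 : Vtx) : R :=
  dist_ind 2 z1 z2 * dist_ind 2 z1 z3 * dist_ind 2 z2 z3 *
  (1 - \sum_(u : Vtx) dist_ind 1 z1 u * dist_ind 1 z2 u * dist_ind 1 z3 u).

Lemma orbit_polyE z1 z2 z3 : orbit_poly z1 z2 z3 = \sum_(pi : {perm 'I_5})
  [&& z1 == actV pi (vtx 0), z2 == actV pi (vtx 1) & z3 == actV pi (vtx 2)]%:R.
Proof.
have [k1 H1 ->] := vtx_surj z1; have [k2 H2 ->] := vtx_surj z2.
have [k3 H3 ->] := vtx_surj z3.
under eq_bigr => pi _ do rewrite !eq_vtx_act //.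
rewrite (sum_perm (fun l => [&& k1 == actc l 0, k2 == actc l 1 & k3 == actc l 2]%:R)).
rewrite sum_count /orbit_poly /dist_ind !pdist_vtx // sum_vtx.
under eq_bigr => m _ do rewrite !pdist_vtx ?ltn_ord // -natr_and3.
rewrite -(big_mkord xpredT (fun m => [&& pdistc k1 m == 1, pdistc k2 m == 1
  & pdistc k3 m == 1]%:R)) sum_count -natr_and3.
have := orbit_count_specP H1 H2 H3; rewrite /orbit_count_spec.
case: ifP => _; last by move/eqP => ->; rewrite mul0r.
by case/andP => Hc /eqP ->; rewrite mul1r natrB.
Qed.

Definition locate (v z1 z2 z3 y : Vtx) : R :=
  dist_ind (pdist (vtx 0) v) z1 y * dist_ind (pdist (vtx 1) v) z2 y *
  dist_ind (pdist (vtx 2) v) z3 y.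

(* Since the base triple is resolving, on its image under pi the function
   locate v detects the vertex pi v. *)
Lemma locate_act (pi : {perm 'I_5}) v y :
  locate v (actV pi (vtx 0)) (actV pi (vtx 1)) (actV pi (vtx 2)) y = (y == actV pi v)%:R.
Proof.
rewrite /locate /dist_ind -{1 2 3}(actKV pi y) !pdist_act -natr_and3.
congr ((nat_of_bool _)%:R); apply/idP/idP => [/and3P [/eqP E0 /eqP E1 /eqP E2] | /eqP ->].
  by rewrite -(base_resolving E0 E1 E2) actKV.
by rewrite actVK !eqxx.
Qed.

Definition orbit_ind n (x : n.-tuple Vtx) (y : seq Vtx) : R :=
  \sum_z1 \sum_z2 \sum_z3 (orbit_poly z1 z2 z3 *
    \prod_(j < n) locate (tnth x j) z1 z2 z3 (nth vtx0 y j)).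

Lemma sum3_delta (A B C : {perm 'I_5} -> Vtx) (h : Vtx -> Vtx -> Vtx -> R) :
  \sum_z1 \sum_z2 \sum_z3 ((\sum_(pi : {perm 'I_5})
     [&& z1 == A pi, z2 == B pi & z3 == C pi]%:R) * h z1 z2 z3)
  = \sum_(pi : {perm 'I_5}) h (A pi) (B pi) (C pi).
Proof.
under eq_bigr => z1 _ do under eq_bigr => z2 _ do under eq_bigr => z3 _ do
  rewrite mulr_suml.
under eq_bigr => z1 _ do under eq_bigr => z2 _ do rewrite exchange_big.
under eq_bigr => z1 _ do rewrite exchange_big.
rewrite exchange_big; apply: eq_bigr => pi _.
under eq_bigr => z1 _ do under eq_bigr => z2 _ do under eq_bigr => z3 _ do
  rewrite !natr_and -!mulrA.
under eq_bigr => z1 _ do under eq_bigr => z2 _ do rewrite -!mulr_sumr sum_delta_l.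
under eq_bigr => z1 _ do rewrite -mulr_sumr sum_delta_l.
by rewrite sum_delta_l.
Qed.

Lemma orbit_indE n (x y : n.-tuple Vtx) :
  orbit_ind x y = \sum_(pi : {perm 'I_5}) (y == [tuple of map (actV pi) x])%:R.
Proof.
rewrite /orbit_ind.
under eq_bigr => z1 _ do under eq_bigr => z2 _ do under eq_bigr => z3 _ do
  rewrite orbit_polyE.
rewrite (sum3_delta (fun pi => actV pi (vtx 0)) (fun pi => actV pi (vtx 1))
  (fun pi => actV pi (vtx 2))
  (fun z1 z2 z3 => \prod_(j < n) locate (tnth x j) z1 z2 z3 (nth vtx0 y j))).
apply: eq_bigr => pi _.
under eq_bigr => j _ do rewrite locate_act -tnth_nth.
rewrite prod_natb; congr ((nat_of_bool _)%:R); apply/forallP/eqP => [H | -> j].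
  by apply: eq_from_tnth => j; rewrite tnth_map; apply/eqP/H.
by rewrite tnth_map.
Qed.

End OrbitIndicator.

Section InvariantTensors.
Variable F : numClosedFieldType.
Local Open Scope ring_scope.

Lemma coord_act n (t : tensor F n) pi (s : seq Vtx) : fixedS5 t -> size s = n ->
  coord t (map (actV pi) s) = coord t s.
Proof.
move=> Ht Hs; rewrite /coord -[RHS](Ht pi); congr (t _); apply: val_inj.
have Emap := mktuple_nth vtx0 (s := map (actV pi) s) (n := n).
rewrite Emap ?size_map //=; congr map; exact: (esym (mktuple_nth vtx0 Hs)).
Qed.

Lemma fixed_tensor_of n (f : seq Vtx -> F) :
  (forall pi (w : n.-tuple Vtx), f (map (actV pi) w) = f w) -> fixedS5 (tensor_of n f).
Proof. by move=> H pi w; rewrite !ffunE /= H. Qed.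

Lemma fixed_closed : closed_family (fun n (t : tensor F n) => fixedS5 t).
Proof.
split.
- by move=> n pi w; rewrite !ffunE.
- by move=> n s t Hs Ht pi w; rewrite !ffunE Hs Ht.
- by move=> n c t Ht pi w; rewrite !ffunE Ht.
- by move=> pi w; rewrite !ffunE.
- move=> n m s t Hs Ht; rewrite -(coordK s) -(coordK t) tprod_tensor_of.
  apply: fixed_tensor_of => pi w.
  have Htake : size (take n w) = n by rewrite size_take size_tuple; case: ltnP; lia.
  have Hdrop : size (drop n w) = m by rewrite size_drop size_tuple; lia.
  by rewrite -map_take -map_drop !coord_act.
- move=> n k t Hk Ht; rewrite -(coordK t) contr_tensor_of //.
  apply: fixed_tensor_of => pi w.
  rewrite (reindex_inj (@actV_inj pi)) /=; apply: eq_bigr => u _.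
  rewrite -map_take -map_drop -!(map_cons (actV pi) u) -map_cat coord_act //.
  by rewrite size_cat /= size_take size_drop size_tuple; case: ltnP; lia.
- move=> n t Ht; rewrite -(coordK t) rot_tensor_of.
  apply: fixed_tensor_of => pi w.
  by rewrite -map_rotr coord_act // size_rotr size_tuple.
Qed.

Lemma fixed_GHZ : fixedS5 (GHZ F).
Proof. by move=> pi w; rewrite !ffunE !tnth_map !(inj_eq (@actV_inj pi)). Qed.

Lemma fixed_Rtr : fixedS5 (Rtr F).
Proof. by move=> pi w; rewrite !ffunE !tnth_map !(inj_eq (@actV_inj pi)). Qed.

Lemma orbit_average n (t : tensor F n) : fixedS5 t -> forall y : n.-tuple Vtx,
  \sum_(x : n.-tuple Vtx) t x * orbit_ind F x y = t y *+ 120.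
Proof.
move=> Ht y; under eq_bigr => x _ do rewrite orbit_indE mulr_sumr.
rewrite exchange_big /=.
have actK_map (p q : {perm 'I_5}) (s : seq Vtx) : (forall v, actV p (actV q v) = v) ->
    map (actV p) (map (actV q) s) = s.
  by move=> Hpq; rewrite -map_comp map_id_in // => v _ /=; rewrite Hpq.
have Hpi (pi : {perm 'I_5}) :
    \sum_(x : n.-tuple Vtx) t x * (y == [tuple of map (actV pi) x])%:R = t y.
  set x0 := [tuple of map (actV pi^-1%g) y].
  rewrite -[RHS](Ht pi^-1%g) -(sum_delta x0); apply: eq_bigr => x _.
  congr (_ * (nat_of_bool _)%:R); rewrite /x0; apply/eqP/eqP => [-> | ->]; apply: val_inj.
    by rewrite /= actK_map // => v; rewrite actVK.
  by rewrite /= actK_map // => v; rewrite actKV.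
under eq_bigr => pi _ do rewrite Hpi.
by rewrite sumr_const card_Sn.
Qed.

End InvariantTensors.

Section WordLemmas.
Variable T : Type.
Implicit Types (a b s : seq T) (x y : T).

Lemma take_cat1 a x b : take (size a).+1 (a ++ x :: b) = a ++ [:: x].
Proof. by elim: a => [|z a IH] /=; [rewrite take0 | rewrite IH]. Qed.

Lemma take_cat2 a x y b : take (size a).+2 (a ++ x :: y :: b) = a ++ [:: x; y].
Proof. by elim: a => [|z a IH] /=; [rewrite take0 | rewrite IH]. Qed.

Lemma drop_cat1 a x b : drop (size a).+1 (a ++ x :: b) = b.
Proof. by elim: a => [|z a IH] /=; [rewrite drop0 | rewrite IH]. Qed.

Lemma drop_cat2 a x y b : drop (size a).+2 (a ++ x :: y :: b) = b.
Proof. by elim: a => [|z a IH] /=; [rewrite drop0 | rewrite IH]. Qed.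

Lemma nth_cat_size x0 a b j : nth x0 (a ++ b) (size a + j) = nth x0 b j.
Proof. by rewrite nth_cat ltnNge leq_addr /= addKn. Qed.

Lemma size_take_le n s : n <= size s -> size (take n s) = n.
Proof. by move=> Hn; rewrite size_take; case: ltnP; lia. Qed.

Lemma split_last1 x0 s n : size s = n.+1 -> s = take n s ++ [:: nth x0 s n].
Proof.
move=> Hs; rewrite -[in LHS](cat_take_drop n s); congr cat.
by rewrite (drop_nth x0) ?Hs // drop_oversize ?Hs.
Qed.

End WordLemmas.

Definition pullw (phi : nat -> nat) m (s : seq Vtx) : seq Vtx :=
  [seq nth vtx0 s (phi i) | i <- iota 0 m].

Lemma size_pullw phi m s : size (pullw phi m s) = m.
Proof. by rewrite size_map size_iota. Qed.

Lemma nth_pullw phi m s i : i < m -> nth vtx0 (pullw phi m s) i = nth vtx0 s (phi i).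
Proof. by move=> Hi; rewrite (nth_map 0) ?size_iota // nth_iota. Qed.

Lemma pullwE phi m s w : size w = m ->
  (forall i, i < m -> nth vtx0 w i = nth vtx0 s (phi i)) -> pullw phi m s = w.
Proof.
move=> Hw H; apply: (@eq_from_nth _ vtx0); rewrite size_pullw // => i Hi.
by rewrite nth_pullw // H.
Qed.

Section GeneratedFamily.
Variable F : numClosedFieldType.
Variable Q : forall n, tensor F n -> Prop.
Hypothesis HQ : closed_family Q.
Hypothesis HP : forall s : tensor F 2, fixedS5 s -> Q s.
Hypothesis HG : Q (GHZ F).
Hypothesis HR : Q (Rtr F).
Local Open Scope ring_scope.

Definition Qf n (f : seq Vtx -> F) := Q (tensor_of n f).

Lemma Qf_ext n f g : (forall s, size s = n -> f s = g s) -> Qf n f -> Qf n g.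
Proof.
by move=> H; rewrite /Qf; congr (Q _); apply/ffunP => w; rewrite !ffunE H ?size_tuple.
Qed.

Lemma Qf_cast n m f : n = m -> Qf n f -> Qf m f.
Proof. by move=> ->. Qed.

Lemma Qf_tensor n (t : tensor F n) : Q t -> Qf n (coord t).
Proof. by rewrite /Qf coordK. Qed.

Lemma Qf_add n f g : Qf n f -> Qf n g -> Qf n (fun s => f s + g s).
Proof.
move=> Hf Hg; have := fam_add HQ Hf Hg; congr (Q _).
by apply/ffunP => w; rewrite !ffunE.
Qed.

Lemma Qf_scale n c f : Qf n f -> Qf n (fun s => c * f s).
Proof.
move=> Hf; have := fam_scale HQ c Hf; congr (Q _).
by apply/ffunP => w; rewrite !ffunE.
Qed.

Lemma Qf_zero n : Qf n (fun _ => 0).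
Proof. by have := fam_0 HQ n; congr (Q _); apply/ffunP => w; rewrite !ffunE. Qed.

Lemma Qf_prod n m f g : Qf n f -> Qf m g ->
  Qf (n + m) (fun s => f (take n s) * g (drop n s)).
Proof. by move=> Hf Hg; have := fam_prod HQ Hf Hg; rewrite tprod_tensor_of. Qed.

Lemma Qf_contr n k f : (k <= n)%N -> Qf n.+2 f ->
  Qf n (fun s => \sum_(u : Vtx) f (take k s ++ u :: u :: drop k s)).
Proof. by move=> Hk Hf; have := fam_contr HQ Hk Hf; rewrite contr_tensor_of. Qed.

Lemma Qf_rot n f : Qf n f -> Qf n (fun s => f (rotr 1 s)).
Proof. by move=> Hf; have := fam_rot HQ Hf; rewrite rot_tensor_of. Qed.

Lemma Qf_GHZ :
  Qf 3 (fun s => [&& nth vtx0 s 0 == nth vtx0 s 1 & nth vtx0 s 1 == nth vtx0 s 2]%:R).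
Proof.
have := Qf_tensor HG; apply: Qf_ext => s Hs.
by rewrite /coord ffunE !tnth_mktuple.
Qed.

Lemma Qf_R :
  Qf 4 (fun s => [&& nth vtx0 s 0 == nth vtx0 s 2 & nth vtx0 s 1 == nth vtx0 s 3]%:R).
Proof.
have := Qf_tensor HR; apply: Qf_ext => s Hs.
by rewrite /coord ffunE !tnth_mktuple.
Qed.

(* The all-ones vector of P_1 is a contraction of GHZ; with tensor powers of
   it, every constant tensor lies in Q. *)
Lemma Qf_ones : Qf 1 (fun _ => 1).
Proof.
have := Qf_contr (k := 0) (leq0n 1) Qf_GHZ; apply: Qf_ext => s Hs /=.
rewrite -[RHS](sum_delta (nth vtx0 s 0) (fun _ => 1)).
by apply: eq_bigr => u _; rewrite take0 drop0 /= eqxx eq_sym mul1r.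
Qed.

Lemma Qf_const n c : Qf n (fun _ => c).
Proof.
elim: n => [|n IH].
  have Hunit : Qf 0 (fun _ => 1) := fam_unit HQ.
  by have := Qf_scale c Hunit; apply: Qf_ext => s _; rewrite mulr1.
by have := Qf_prod IH Qf_ones; rewrite addn1; apply: Qf_ext => s _; rewrite mulr1.
Qed.

Lemma Qf_glue n k f g : Qf n.+2 f -> Qf k.+2 g ->
  Qf (n + k) (fun s => \sum_(u : Vtx) \sum_(u' : Vtx)
    f (take n s ++ [:: u; u']) * g (u' :: u :: drop n s)).
Proof.
move=> Hf Hg.
have Hfg := Qf_contr (n := (n + k).+2) (k := n.+1) (ltac:(lia))
  (Qf_cast (n := (n.+2 + k.+2)%N) (m := (n + k).+4) (ltac:(lia)) (Qf_prod Hf Hg)).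
have := Qf_contr (n := n + k) (k := n) (leq_addr k n) Hfg.
apply: Qf_ext => s Hs; apply: eq_bigr => u _; apply: eq_bigr => u' _.
set a := take n s; have Ha : size a = n by rewrite size_take_le ?Hs ?leq_addr.
by rewrite -Ha take_cat1 drop_cat1 -catA /= take_cat2 drop_cat2.
Qed.

Definition pull_closed m n (phi : nat -> nat) :=
  forall f, Qf m f -> Qf n (fun s => f (pullw phi m s)).

Lemma pullw_last2 n phi s : (n <= size s)%N -> (forall i, (i < n)%N -> phi i = i) ->
  pullw phi n.+2 s = take n s ++ [:: nth vtx0 s (phi n); nth vtx0 s (phi n.+1)].
Proof.
move=> Hn Hphi; apply: pullwE => [|i Hi]; first by rewrite size_cat size_take_le //= addn2.
rewrite nth_cat size_take_le //; case: ltnP => Hin; first by rewrite nth_take // Hphi.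
have [->|->] : i = n \/ i = n.+1 by lia.
  by rewrite subnn.
by rewrite subSnn.
Qed.

(* The generating re-indexings: gluing R swaps the last two legs, gluing GHZ
   merges them, tensoring with ones adds legs in front, and rotation
   rotates. *)
Lemma pull_swap_last n :
  pull_closed n.+2 n.+2 (fun i => if i == n then n.+1 else if i == n.+1 then n else i).
Proof.
move=> f Hf; have := Qf_cast (addn2 n) (Qf_glue Hf Qf_R).
apply: Qf_ext => s Hs; have Hn : (n <= size s)%N by rewrite Hs; lia.
rewrite pullw_last2 //; last first.
  by move=> i Hi; rewrite ifN ?ifN //; apply/negP => /eqP; lia.
rewrite !eqxx /= ifN; last by apply/negP => /eqP; lia.
under eq_bigr => u _ do under eq_bigr => u' _ do
  rewrite /= !nth_drop addn0 addn1 natr_and mulrA mulrAC.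
under eq_bigr => u _ do rewrite sum_delta.
by rewrite sum_delta.
Qed.

Lemma pull_merge_last n : pull_closed n.+2 n.+1 (fun i => if i == n.+1 then n else i).
Proof.
move=> f Hf; have := Qf_cast (addn1 n) (Qf_glue Hf Qf_GHZ).
apply: Qf_ext => s Hs; have Hn : (n <= size s)%N by rewrite Hs; lia.
rewrite pullw_last2 //; last first.
  by move=> i Hi; rewrite ifN //; apply/negP => /eqP; lia.
rewrite !eqxx /= ifN; last by apply/negP => /eqP; lia.
under eq_bigr => u _ do under eq_bigr => u' _ do
  rewrite /= nth_drop addn0 natr_and mulrA mulrAC.
under eq_bigr => u _ do rewrite sum_delta.
by rewrite sum_delta.
Qed.

Lemma pull_add_legs n k : pull_closed k (n + k) (fun i => (i + n)%N).
Proof.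
move=> f Hf; have := Qf_prod (Qf_const n 1) Hf.
apply: Qf_ext => s Hs; rewrite mul1r; congr f; symmetry; apply: pullwE => [|i Hi].
  by rewrite size_drop Hs addKn.
by rewrite nth_drop addnC.
Qed.

Lemma pull_rotate n : pull_closed n n (fun i => if i == 0%N then n.-1 else i.-1).
Proof.
move=> f Hf; have := Qf_rot Hf; apply: Qf_ext => s Hs; congr f.
case: n Hs {Hf} => [/size0nil -> // | n Hs].
rewrite (split_last1 vtx0 Hs); set a := take n s; set y := nth vtx0 s n.
have Ha : size a = n by rewrite size_take_le ?Hs.
have -> : rotr 1 (a ++ [:: y]) = y :: a.
  by rewrite /rotr size_cat addn1 subn1 /= /rot drop_size_cat // take_size_cat.
symmetry; apply: pullwE => [|[|i] Hi /=]; first by rewrite /= Ha.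
  by rewrite -Ha -[size a]addn0 nth_cat_size.
by rewrite nth_cat Ha ifT //; lia.
Qed.

Lemma Qf_sum_last n f : Qf n.+1 f -> Qf n (fun s => \sum_(u : Vtx) f (rcons s u)).
Proof.
move=> Hf; have := Qf_contr (k := n) (leqnn n) (Qf_cast (addn1 n.+1) (Qf_prod Hf Qf_ones)).
apply: Qf_ext => s Hs; apply: eq_bigr => u _.
have -> : take n s = s by rewrite take_oversize ?Hs.
have -> : drop n s = [::] by rewrite drop_oversize ?Hs.
by rewrite -Hs take_cat1 cats1 mulr1.
Qed.

Lemma pull_comp m n p phi psi : pull_closed m n phi -> pull_closed n p psi ->
  (forall i, (i < m)%N -> (phi i < n)%N) -> pull_closed m p (fun i => psi (phi i)).
Proof.
move=> H1 H2 Hb f Hf; have := H2 _ (H1 _ Hf); apply: Qf_ext => s Hs; congr f.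
apply: pullwE; rewrite ?size_pullw // => i Hi.
by rewrite !nth_pullw // Hb.
Qed.

Lemma pull_ext m n phi psi : pull_closed m n phi ->
  (forall i, (i < m)%N -> phi i = psi i) -> pull_closed m n psi.
Proof.
move=> H He f Hf; have := H _ Hf; apply: Qf_ext => s Hs; congr f.
apply: pullwE; rewrite ?size_pullw // => i Hi.
by rewrite nth_pullw // He.
Qed.

Lemma pull_id n : pull_closed n n id.
Proof. by move=> f; apply: Qf_ext => s Hs; congr f; symmetry; apply: pullwE. Qed.

Lemma pull_cast m n m' n' phi : m = m' -> n = n' -> pull_closed m n phi ->
  pull_closed m' n' phi.
Proof. by move=> -> ->. Qed.

(* Closes a goal of linear arithmetic on indices after splitting the
   conditionals it contains. *)
Ltac index_arith := cbv beta; repeat match goal with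
  | |- context [if ?b then _ else _] =>
     lazymatch b with context [if _ then _ else _] => fail | _ =>
       case: (boolP b) => ? end
  end; lia.

Definition rot_index N k i := if (k <= i)%N then (i - k)%N else (i + N - k)%N.

Lemma pull_rot_by N k : (k <= N)%N -> pull_closed N N (rot_index N k).
Proof.
elim: k => [|k IH] Hk.
  by apply: (pull_ext (@pull_id N)) => i Hi; rewrite /rot_index; index_arith.
have H := pull_comp (IH (ltnW Hk)) (@pull_rotate N)
  (fun i Hi => ltac:(rewrite /rot_index; index_arith)).
by apply: (pull_ext H) => i Hi; rewrite /rot_index; index_arith.
Qed.

(* Conjugating by rotations moves the swap and the merge of the last two legs
   to any two adjacent legs. *)
Lemma pull_swap N i : (i.+1 < N)%N ->
  pull_closed N N (fun x => if x == i then i.+1 else if x == i.+1 then i else x).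
Proof.
case: N => [|[|n]] Hi //.
have H1 := pull_comp (pull_rot_by Hi) (@pull_swap_last n)
  (fun x Hx => ltac:(rewrite /rot_index; index_arith)).
have H2 := pull_comp H1 (pull_rot_by (leq_subr i.+2 n.+2))
  (fun x Hx => ltac:(rewrite /rot_index; index_arith)).
by apply: (pull_ext H2) => x Hx; rewrite /rot_index; index_arith.
Qed.

Lemma pull_merge_adj n j : (j.+1 < n.+2)%N ->
  pull_closed n.+2 n.+1 (fun x => if (x <= j)%N then x else x.-1).
Proof.
move=> Hj.
have H1 := pull_comp (pull_rot_by Hj) (@pull_merge_last n)
  (fun x Hx => ltac:(rewrite /rot_index; index_arith)).
have H2 := pull_comp H1 (@pull_rot_by n.+1 (n - j) (ltac:(lia)))
  (fun x Hx => ltac:(rewrite /rot_index; index_arith)).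
by apply: (pull_ext H2) => x Hx; rewrite /rot_index; index_arith.
Qed.

(* Moving the leg p + d to position p, by d adjacent swaps. *)
Definition move_index p d x :=
  if (x < p)%N then x else if x == (p + d)%N then p
  else if (x < p + d)%N then x.+1 else x.

Lemma pull_move N p d : (p + d < N)%N -> pull_closed N N (move_index p d).
Proof.
elim: d => [|d IH] Hd.
  by apply: (pull_ext (@pull_id N)) => i Hi; rewrite /move_index; index_arith.
have H := pull_comp (@pull_swap N (p + d) (ltac:(lia))) (IH (ltac:(lia)))
  (fun x Hx => ltac:(index_arith)).
by apply: (pull_ext H) => i Hi; rewrite /move_index; index_arith.
Qed.

Lemma pull_merge n k j : (j < n)%N ->
  pull_closed (n.+1 + k) (n + k) (fun x => if (x < n)%N then x else if x == n then j else x.-1).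
Proof.
move=> Hj.
have H1 := @pull_move (n.+1 + k) j.+1 (n - j.+1) (ltac:(lia)).
have Em : ((n + k).-1.+2 = n.+1 + k)%N by lia.
have En : ((n + k).-1.+1 = n + k)%N by lia.
have H2 := pull_cast Em En (@pull_merge_adj (n + k).-1 j (ltac:(lia))).
have H := pull_comp H1 H2 (fun x Hx => ltac:(rewrite /move_index; index_arith)).
by apply: (pull_ext H) => i Hi; rewrite /move_index; index_arith.
Qed.

(* Every map phi : [m] -> [n] is a composite of the generators, so Q is closed
   under every re-indexing.  Induction on m, keeping k untouched legs. *)
Lemma pull_any_tail m : forall k n phi, (forall i, (i < m)%N -> (phi i < n)%N) ->
  pull_closed (m + k) (n + k) (fun i => if (i < m)%N then phi i else (i - m + n)%N).
Proof.
elim: m => [|m IH] k n phi Hphi.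
  by apply: (pull_ext (@pull_add_legs n k)) => i Hi /=; lia.
have Em : (m + k.+1 = m.+1 + k)%N by lia.
have En : (n + k.+1 = n.+1 + k)%N by lia.
have H1 := pull_cast Em En (IH k.+1 n phi (fun i Hi => Hphi i (ltac:(lia)))).
have Hb i : (i < m.+1 + k)%N ->
    ((if (i < m)%N then phi i else (i - m + n)%N) < n.+1 + k)%N.
  move=> Hi; case: (ltnP i m) => Him /=; last by lia.
  by have := Hphi i (ltac:(lia)); lia.
have H := pull_comp H1 (@pull_merge n k (phi m) (Hphi m (ltnSn m))) Hb.
apply: (pull_ext H) => i Hi /=.
case: (ltngtP i m) => Him; last (subst i); try index_arith.
by have := Hphi i (ltac:(lia)); move: (phi i) => p Hp; index_arith.
Qed.

Lemma Qf_pull m n phi f : (forall i, (i < m)%N -> (phi i < n)%N) ->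
  Qf m f -> Qf n (fun s => f (pullw phi m s)).
Proof.
move=> Hphi; apply: (pull_ext (pull_cast (addn0 m) (addn0 n) (@pull_any_tail m 0 n phi Hphi))).
by move=> i ->.
Qed.

(* Pointwise products: the tensor product f (x) g re-indexed along i |-> i mod n. *)
Lemma Qf_mul n f g : Qf n f -> Qf n g -> Qf n (fun s => f s * g s).
Proof.
move=> Hf Hg.
have := @Qf_pull (n + n) n (fun i => if (i < n)%N then i else (i - n)%N) _
  (fun i Hi => ltac:(index_arith)) (Qf_prod Hf Hg).
apply: Qf_ext => s Hs.
have -> : pullw (fun i => if (i < n)%N then i else (i - n)%N) (n + n) s = s ++ s.
  apply: pullwE => [|i Hi]; first by rewrite size_cat Hs.
  by rewrite nth_cat Hs; case: ltnP.
by rewrite -Hs take_size_cat // drop_size_cat.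
Qed.

Lemma Qf_bigprod (I : Type) (r : seq I) n (G : I -> seq Vtx -> F) :
  (forall x, Qf n (G x)) -> Qf n (fun s => \prod_(x <- r) G x s).
Proof.
move=> H; elim: r => [|x r IH].
  by have := Qf_const n 1; apply: Qf_ext => s _; rewrite big_nil.
by have := Qf_mul (H x) IH; apply: Qf_ext => s _; rewrite big_cons.
Qed.

Lemma Qf_bigsum (I : Type) (r : seq I) n (G : I -> seq Vtx -> F) :
  (forall x, Qf n (G x)) -> Qf n (fun s => \sum_(x <- r) G x s).
Proof.
move=> H; elim: r => [|x r IH].
  by have := Qf_zero n; apply: Qf_ext => s _; rewrite big_nil.
by have := Qf_add (H x) IH; apply: Qf_ext => s _; rewrite big_cons.
Qed.

Lemma Qf_dist_ind N r i j : (i < N)%N -> (j < N)%N ->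
  Qf N (fun s => dist_ind F r (nth vtx0 s i) (nth vtx0 s j)).
Proof.
move=> Hi Hj.
have H2 : Qf 2 (fun s => dist_ind F r (nth vtx0 s 0) (nth vtx0 s 1)).
  apply: HP; apply: fixed_tensor_of => pi w.
  by rewrite !(nth_map vtx0) ?size_tuple // /dist_ind pdist_act.
have := @Qf_pull 2 N (fun k => if k == 0%N then i else j) _
  (fun k Hk => ltac:(index_arith)) H2.
by apply: Qf_ext => s Hs; rewrite !nth_pullw.
Qed.

Lemma Qf_orbit_poly N i j k : (i < N)%N -> (j < N)%N -> (k < N)%N ->
  Qf N (fun s => orbit_poly F (nth vtx0 s i) (nth vtx0 s j) (nth vtx0 s k)).
Proof.
move=> Hi Hj Hk.
have Hcommon := Qf_sum_last (Qf_mul (Qf_mul (@Qf_dist_ind N.+1 1 i N (ltac:(lia)) (ltnSn N))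
  (@Qf_dist_ind N.+1 1 j N (ltac:(lia)) (ltnSn N))) (@Qf_dist_ind N.+1 1 k N (ltac:(lia)) (ltnSn N))).
have := Qf_mul (Qf_mul (Qf_mul (Qf_dist_ind 2 Hi Hj) (Qf_dist_ind 2 Hi Hk))
  (Qf_dist_ind 2 Hj Hk)) (Qf_add (Qf_const N 1) (Qf_scale (-1) Hcommon)).
apply: Qf_ext => s Hs; rewrite /orbit_poly mulN1r; congr (_ * (1 - _)).
by apply: eq_bigr => u _; rewrite !nth_rcons Hs Hi Hj Hk ltnn eqxx.
Qed.

(* Y_x lies in Q: on the word y ++ [z1; z2; z3], multiply S(z) with the
   locating factors and sum out the last three legs. *)
Lemma Qf_orbit_ind n (x : n.-tuple Vtx) : Qf n (orbit_ind F x).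
Proof.
have HS := @Qf_orbit_poly n.+3 n n.+1 n.+2 (ltac:(lia)) (ltac:(lia)) (ltac:(lia)).
have Hloc (j : 'I_n) : Qf n.+3 (fun s => locate F (tnth x j) (nth vtx0 s n)
    (nth vtx0 s n.+1) (nth vtx0 s n.+2) (nth vtx0 s j)).
  have Hj : (j < n.+3)%N by have := ltn_ord j; lia.
  set v := tnth x j; rewrite /locate.
  exact: Qf_mul (Qf_mul (@Qf_dist_ind n.+3 (pdist (vtx 0) v) n j (ltac:(lia)) Hj)
    (@Qf_dist_ind n.+3 (pdist (vtx 1) v) n.+1 j (ltac:(lia)) Hj))
    (@Qf_dist_ind n.+3 (pdist (vtx 2) v) n.+2 j (ltac:(lia)) Hj).
have := Qf_sum_last (Qf_sum_last (Qf_sum_last (Qf_mul HS (Qf_bigprod (index_enum 'I_n) Hloc)))).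
apply: Qf_ext => s Hs; apply: eq_bigr => z1 _; apply: eq_bigr => z2 _; apply: eq_bigr => z3 _.
have -> : rcons (rcons (rcons s z1) z2) z3 = s ++ [:: z1; z2; z3] by rewrite -!cats1 -!catA.
have Ez (i : nat) : nth vtx0 (s ++ [:: z1; z2; z3]) (n + i) = nth vtx0 [:: z1; z2; z3] i.
  by rewrite -Hs nth_cat_size.
have E0 := Ez 0; have E1 := Ez 1; have E2 := Ez 2.
rewrite addn0 /= in E0; rewrite addn1 /= in E1; rewrite addn2 /= in E2.
rewrite E0 E1 E2; congr (_ * _).
by apply: eq_bigr => j _; rewrite nth_cat ifT // Hs.
Qed.

(* An invariant tensor is (1/120) sum_x t(x) Y_x, hence lies in Q. *)
Lemma fixed_in_family n (t : tensor F n) : fixedS5 t -> Q t.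
Proof.
move=> Ht.
have := Qf_scale (120%:R)^-1 (Qf_bigsum (index_enum (n.-tuple Vtx))
  (fun x => Qf_scale (t x) (Qf_orbit_ind x))).
rewrite /Qf; congr (Q _); apply/ffunP => w; rewrite ffunE.
by rewrite (orbit_average Ht w) -[t w *+ 120]mulr_natl mulrA mulVf ?mul1r ?pnatr_eq0.
Qed.

End GeneratedFamily.

Theorem theorem5p3 (F : numClosedFieldType) :
  (forall (n : nat) (t : tensor F n), genQ t <-> fixedS5 t) <-> genQ (Rtr F).
Proof.
split => [Hgen | HR n t].
  by apply/Hgen; apply: fixed_Rtr.
split => [Hgen | Ht Q HQ HP HG].
  exact: (Hgen _ (@fixed_closed F)) (fun s Hs => Hs) (@fixed_GHZ F).
exact: (fixed_in_family HQ HP HG (HR Q HQ HP HG) Ht).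
Qed.
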